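(* Let $x \in (-1/\phi, 1/\phi)$, where $\phi = (1+\sqrt{5})/2$, and let $m \geq 1$ be an integer. Then \[ \sum_{r=1}^{\infty} r^m F_r x^r = \frac{1}{1 - x - x^2} \sum_{i=1}^m \binom{m}{i} (-1)^{i + 1} \sum_{r=1}^{\infty} r^{m - i} F_r x^r + \frac{x^2}{1 - x - x^2} \sum_{i=1}^m \binom{m}{i} \sum_{r=1}^{\infty} r^{m - i} F_r x^r . \]
   Context: $(F_r)_{r \geq 0}$ is the Fibonacci sequence: $F_0 = 0$, $F_1 = 1$, $F_r = F_{r-1} + F_{r-2}$ for $r \geq 2$. For every integer $j \ge 0$ and $x \in (-1/\phi,1/\phi)$ the series $\sum_{r\ge1} r^j F_r x^r$ converges. *)

From Stdlib Require Import Reals Lra.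
From Coquelicot Require Import Coquelicot.
Open Scope R_scope.

Fixpoint fib (r : nat) : nat :=
  match r with
  | O => O
  | S r' => match r' with
            | O => 1%nat
            | S r'' => (fib r' + fib r'')%nat
            end
  end.

Definition phi : R := (1 + sqrt 5) / 2.

(* The series  sum_{r >= 1} r^j F_r x^r, indexed by n = r - 1. *)
Definition fib_moment (j : nat) (x : R) : R :=
  Series (fun n : nat => INR (S n) ^ j * INR (fib (S n)) * x ^ (S n)).

(* Write a_n = n^m F_n x^n.  Multiplying the series by 1 - x - x^2 gives the
   terms a_n - x a_(n-1) - x^2 a_(n-2), and the Fibonacci recurrence turns
   these into (n^m - (n-1)^m) F_n x^n + x^2 ((n-1)^m - (n-2)^m) F_(n-2) x^(n-2).
   Expanding the two differences of m-th powers by the binomial theorem yields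
   exactly the two sums of lower moments.  All series converge absolutely since
   F_n <= phi^n and phi |x| < 1. *)

From Stdlib Require Import Reals Lra Lia Psatz.
From Coquelicot Require Import Coquelicot.
Open Scope R_scope.

Lemma phi_gt_1 : 1 < phi.
Proof.
  unfold phi.
  assert (1 < sqrt 5) by (rewrite <- sqrt_1; apply sqrt_lt_1; lra).
  lra.
Qed.

Lemma phi_sqr : phi ^ 2 = phi + 1.
Proof.
  unfold phi. assert (H5 := sqrt_sqrt 5 ltac:(lra)). simpl. nra.
Qed.

Lemma inv_phi : 1 / phi = phi - 1.
Proof.
  pose proof phi_gt_1. pose proof phi_sqr. simpl in *.
  field_simplify; [|lra]. apply Rmult_eq_reg_r with phi; [|lra].
  field_simplify; [|lra]. nra.
Qed.

Lemma golden_denominator_pos (x : R) :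
  -(1 / phi) < x < 1 / phi -> 0 < 1 - x - x ^ 2.
Proof.
  intros Hx. rewrite inv_phi in Hx. pose proof phi_sqr.
  replace (1 - x - x ^ 2) with ((phi - 1 - x) * (phi + x)) by (simpl in *; nra).
  apply Rmult_lt_0_compat; lra.
Qed.

Lemma fib_SS (n : nat) : fib (S (S n)) = (fib (S n) + fib n)%nat.
Proof. reflexivity. Qed.

Lemma fib_le_phi_pow (n : nat) : INR (fib n) <= phi ^ n.
Proof.
  pose proof phi_gt_1.
  enough (INR (fib n) <= phi ^ n /\ INR (fib (S n)) <= phi ^ S n) by tauto.
  induction n as [|n [IH1 IH2]]; [simpl; split; lra|].
  split; [exact IH2|].
  rewrite fib_SS, plus_INR.
  replace (phi ^ S (S n)) with (phi ^ 2 * phi ^ n) by (rewrite <- pow_add; reflexivity).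
  rewrite phi_sqr, Rmult_plus_distr_r, Rmult_1_l. rewrite <- tech_pow_Rmult in IH2. lra.
Qed.

Lemma is_lim_seq_inv_succ : is_lim_seq (fun n => / (INR n + 1)) 0.
Proof.
  replace (Finite 0) with (Rbar_inv p_infty) by reflexivity.
  apply is_lim_seq_inv; [|discriminate].
  apply (is_lim_seq_ext (fun n => INR (S n))); [intro n; apply S_INR|].
  apply (is_lim_seq_incr_1 INR p_infty), is_lim_seq_INR.
Qed.

Lemma is_lim_seq_succ_ratio_pow (j : nat) :
  is_lim_seq (fun n => (1 + / (INR n + 1)) ^ j) 1.
Proof.
  induction j as [|j IH]; [apply is_lim_seq_const|].
  assert (H := is_lim_seq_mult' _ _ _ _
                 (is_lim_seq_plus' _ _ _ _ (is_lim_seq_const 1) is_lim_seq_inv_succ) IH).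
  rewrite Rplus_0_r, Rmult_1_l in H. exact H.
Qed.

Lemma ex_series_pow_mul_geom (j : nat) (q : R) : 0 < q < 1 ->
  ex_series (fun n => (INR n + 1) ^ j * q ^ n).
Proof.
  intros Hq.
  assert (Hpos : forall n, 0 < (INR n + 1) ^ j * q ^ n).
  { intro n. pose proof (pos_INR n).
    apply Rmult_lt_0_compat; apply pow_lt; lra. }
  apply (ex_series_ext (fun n => Rabs ((INR n + 1) ^ j * q ^ n))).
  { intro n. apply Rabs_pos_eq, Rlt_le, Hpos. }
  apply (ex_series_DAlembert _ q); [lra | intro n; specialize (Hpos n); lra |].
  assert (Hlim := is_lim_seq_mult' _ _ _ _ (is_lim_seq_succ_ratio_pow j) (is_lim_seq_const q)).
  rewrite Rmult_1_l in Hlim.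
  refine (is_lim_seq_ext _ _ _ _ Hlim).
  intro n. pose proof (pos_INR n). pose proof (Hpos n).
  assert (0 < q ^ n) by (apply pow_lt; lra).
  rewrite S_INR, Rabs_pos_eq.
  - replace (1 + / (INR n + 1)) with ((INR n + 1 + 1) / (INR n + 1)) by (field; lra).
    unfold Rdiv. rewrite Rpow_mult_distr, pow_inv. simpl pow.
    field. split; [lra | apply pow_nonzero; lra].
  - apply Rlt_le, Rdiv_lt_0_compat; [|assumption].
    apply Rmult_lt_0_compat; [apply pow_lt; lra|].
    simpl. apply Rmult_lt_0_compat; lra.
Qed.

Definition fib_term (x : R) (j n : nat) : R := INR n ^ j * INR (fib n) * x ^ n.

Lemma ex_series_fib_term (x : R) (j : nat) :
  -(1 / phi) < x < 1 / phi -> ex_series (fib_term x j).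
Proof.
  intros Hx. pose proof phi_gt_1 as Hphi.
  set (q := phi * Rabs x).
  assert (Hq0 : 0 <= q) by (apply Rmult_le_pos; [lra | apply Rabs_pos]).
  assert (Hq1 : q < 1).
  { assert (Habs : Rabs x < 1 / phi) by (apply Rabs_def1; lra).
    apply (Rmult_lt_compat_l phi) in Habs; [|lra].
    replace (phi * (1 / phi)) with 1 in Habs by (field; lra). exact Habs. }
  (* q vanishes at x = 0, so compare with the positive ratio (1 + q) / 2 instead. *)
  apply (@ex_series_le R_AbsRing R_CompleteNormedModule _
           (fun n => (INR n + 1) ^ j * ((1 + q) / 2) ^ n));
    [| apply ex_series_pow_mul_geom; lra].
  intro n. change (norm (fib_term x j n)) with (Rabs (fib_term x j n)).
  unfold fib_term. pose proof (pos_INR n).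
  rewrite !Rabs_mult, <- !RPow_abs, (Rabs_pos_eq (INR n)), (Rabs_pos_eq (INR (fib n)))
    by apply pos_INR.
  rewrite Rmult_assoc.
  apply Rmult_le_compat.
  - apply pow_le; lra.
  - apply Rmult_le_pos; [apply pos_INR | apply pow_le, Rabs_pos].
  - apply pow_incr; lra.
  - apply Rle_trans with (phi ^ n * Rabs x ^ n).
    + apply Rmult_le_compat_r; [apply pow_le, Rabs_pos | apply fib_le_phi_pow].
    + rewrite <- Rpow_mult_distr. apply pow_incr. fold q. lra.
Qed.

Lemma is_series_fib_moment (x : R) (j : nat) :
  -(1 / phi) < x < 1 / phi -> is_series (fib_term x j) (fib_moment j x).
Proof.
  intros Hx. apply is_series_decr_1.
  replace (fib_term x j 0) with 0 by (unfold fib_term; simpl; ring).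
  change (is_series (fun k => fib_term x j (S k)) (fib_moment j x + - 0)).
  rewrite Ropp_0, Rplus_0_r.
  apply (Series_correct (fun n => fib_term x j (S n))).
  apply (ex_series_incr_1 (fib_term x j)), ex_series_fib_term, Hx.
Qed.

Definition delay (a : nat -> R) (n : nat) : R :=
  match n with O => 0 | S k => a k end.

Lemma is_series_delay (a : nat -> R) (l : R) : is_series a l -> is_series (delay a) l.
Proof.
  intros H. apply is_series_decr_1.
  change (is_series a (l + - 0)). rewrite Ropp_0, Rplus_0_r. exact H.
Qed.

Lemma is_series_sum_f_R0 (f : nat -> nat -> R) (l : nat -> R) (k : nat) :
  (forall i, is_series (f i) (l i)) ->
  is_series (fun n => sum_f_R0 (fun i => f i n) k) (sum_f_R0 l k).
Proof.
  intros H. induction k as [|k IH]; [apply H|].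
  exact (is_series_plus _ _ _ _ IH (H (S k))).
Qed.

Lemma is_series_golden_multiple (a : nat -> R) (l x : R) :
  is_series a l ->
  is_series (fun n => a n - x * delay a n - x ^ 2 * delay (delay a) n) ((1 - x - x ^ 2) * l).
Proof.
  intros H.
  assert (H1 := is_series_scal x _ _ (is_series_delay _ _ H)).
  assert (H2 := is_series_scal (x ^ 2) _ _ (is_series_delay _ _ (is_series_delay _ _ H))).
  replace ((1 - x - x ^ 2) * l) with (l - x * l - x ^ 2 * l) by ring.
  exact (is_series_minus _ _ _ _ (is_series_minus _ _ _ _ H H1) H2).
Qed.

Lemma is_series_plus_delay2 (a b : nat -> R) (la lb x : R) :
  is_series a la -> is_series b lb ->
  is_series (fun n => a n + x ^ 2 * delay (delay b) n) (la + x ^ 2 * lb).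
Proof.
  intros Ha Hb.
  exact (is_series_plus _ _ _ _ Ha
           (is_series_scal (x ^ 2) _ _ (is_series_delay _ _ (is_series_delay _ _ Hb)))).
Qed.

Lemma sum_f_R0_drop_first (a : nat -> R) (n : nat) :
  sum_f_R0 (fun i => if Nat.eqb i 0 then 0 else a i) n = sum_f_R0 a n - a 0%nat.
Proof. induction n as [|n IH]; simpl; [ring | rewrite IH; ring]. Qed.

Lemma binomial_C_n_0 (n : nat) : Binomial.C n 0 = 1.
Proof.
  unfold Binomial.C. rewrite Nat.sub_0_r. simpl (INR (Factorial.fact 0)).
  field. apply INR_fact_neq_0.
Qed.

Lemma sum_binomial_pow_sub_pred (m : nat) (y : R) :
  sum_f_R0 (fun i => if Nat.eqb i 0 then 0 else
              Binomial.C m i * (-1) ^ (i + 1) * y ^ (m - i)) m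
  = y ^ m - (y - 1) ^ m.
Proof.
  rewrite sum_f_R0_drop_first, binomial_C_n_0, Nat.sub_0_r.
  replace (y - 1) with (-1 + y) by ring. rewrite binomial.
  rewrite (sum_eq _ (fun i => Binomial.C m i * (-1) ^ i * y ^ (m - i) * -1)).
  - rewrite <- scal_sum. simpl. ring.
  - intros i _. rewrite pow_add. ring.
Qed.

Lemma sum_binomial_pow_succ_sub (m : nat) (y : R) :
  sum_f_R0 (fun i => if Nat.eqb i 0 then 0 else Binomial.C m i * y ^ (m - i)) m
  = (1 + y) ^ m - y ^ m.
Proof.
  rewrite sum_f_R0_drop_first, binomial_C_n_0, Nat.sub_0_r, binomial.
  rewrite (sum_eq (fun i => Binomial.C m i * 1 ^ i * y ^ (m - i))
                  (fun i => Binomial.C m i * y ^ (m - i))); [ring|].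
  intros i _. rewrite pow1. ring.
Qed.

Lemma is_series_lower_moments (x : R) (m : nat) (c : nat -> R) (p : R -> R) :
  -(1 / phi) < x < 1 / phi ->
  (forall y, sum_f_R0 (fun i => if Nat.eqb i 0 then 0 else c i * y ^ (m - i)) m = p y) ->
  is_series (fun n => p (INR n) * (INR (fib n) * x ^ n))
    (sum_f_R0 (fun i => if Nat.eqb i 0 then 0 else c i * fib_moment (m - i) x) m).
Proof.
  intros Hx Hp.
  set (c0 := fun i => if Nat.eqb i 0 then 0 else c i).
  replace (sum_f_R0 _ m) with (sum_f_R0 (fun i => c0 i * fib_moment (m - i) x) m)
    by (apply sum_eq; intros i _; unfold c0; destruct (Nat.eqb i 0); ring).
  apply (is_series_ext (fun n => sum_f_R0 (fun i => c0 i * fib_term x (m - i) n) m)).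
  { intro n. rewrite <- Hp, Rmult_comm, scal_sum. apply sum_eq. intros i _.
    unfold c0, fib_term. destruct (Nat.eqb i 0); ring. }
  apply is_series_sum_f_R0. intro i.
  exact (is_series_scal (c0 i) _ _ (is_series_fib_moment x (m - i) Hx)).
Qed.

(* [1 <= m] is needed at n = 1, where (n - 1)^m must vanish. *)
Lemma fib_term_golden_identity (x : R) (m n : nat) : (1 <= m)%nat ->
  fib_term x m n - x * delay (fib_term x m) n - x ^ 2 * delay (delay (fib_term x m)) n
  = (INR n ^ m - (INR n - 1) ^ m) * (INR (fib n) * x ^ n)
    + x ^ 2 * delay (delay (fun k => ((1 + INR k) ^ m - INR k ^ m) * (INR (fib k) * x ^ k))) n.
Proof.
  intros Hm. unfold fib_term.
  destruct n as [|[|k]]; cbn [delay].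
  - simpl. ring.
  - simpl INR. rewrite Rminus_diag, pow_i, pow1 by lia. simpl. ring.
  - rewrite fib_SS, plus_INR, !S_INR.
    replace (INR k + 1 + 1 - 1) with (INR k + 1) by ring.
    replace (1 + INR k) with (INR k + 1) by ring.
    simpl pow. ring.
Qed.

Theorem theorem4p1 (x : R) (m : nat) :
  -(1 / phi) < x < 1 / phi -> (1 <= m)%nat ->
  fib_moment m x =
    1 / (1 - x - x ^ 2) *
      sum_f_R0 (fun i => if Nat.eqb i 0 then 0 else
                  Binomial.C m i * (-1) ^ (i + 1) * fib_moment (m - i) x) m
  + x ^ 2 / (1 - x - x ^ 2) *
      sum_f_R0 (fun i => if Nat.eqb i 0 then 0 else
                  Binomial.C m i * fib_moment (m - i) x) m.
Proof.
  intros Hx Hm.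
  assert (Hlhs := is_series_golden_multiple _ _ x (is_series_fib_moment x m Hx)).
  assert (Hrhs := is_series_plus_delay2 _ _ _ _ x
                    (is_series_lower_moments x m _ _ Hx (sum_binomial_pow_sub_pred m))
                    (is_series_lower_moments x m _ _ Hx (sum_binomial_pow_succ_sub m))).
  apply is_series_unique in Hlhs, Hrhs.
  rewrite (Series_ext _ _ (fun n => fib_term_golden_identity x m n Hm)), Hrhs in Hlhs.
  pose proof (golden_denominator_pos x Hx).
  apply Rmult_eq_reg_l with (1 - x - x ^ 2); [|lra].
  rewrite <- Hlhs. field. lra.
Qed.
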